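(* Let $1\le i<s\le u$ and let $\mathcal H$ be an $s$-graph with $\Delta_i(\mathcal H)\le\binom{x-i}{s-i}$ for some real $x\ge s$. If $x<u$ then $\mathcal H$ has no $u$-cliques. Otherwise, the $u$-graph $\mathcal U=\mathcal K^u(\mathcal H)$ (whose edges are the $u$-cliques of $\mathcal H$) satisfies $\Delta_i(\mathcal U)\le\binom{x-i}{u-i}$.
   Context: An $s$-graph is a family of $s$-subsets (edges) of a vertex set $V$. For $|I|=i$, $d_{\mathcal H}(I)$ is the number of edges containing $I$ and $\Delta_i(\mathcal H)=\max_{|I|=i}d_{\mathcal H}(I)$. For $u\ge s$, a $u$-clique of $\mathcal H$ is a $u$-set all of whose $s$-subsets are edges; $\mathcal K^u(\mathcal H)$ is the set of $u$-cliques. For real $x$, $\binom{x}{k}=x(x-1)\cdots(x-k+1)/k!$. *)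

From mathcomp Require Import all_boot all_order all_algebra.
From mathcomp Require Import reals.
Set Implicit Arguments. Unset Strict Implicit. Unset Printing Implicit Defensive.
Import Order.TTheory GRing.Theory Num.Theory.

Definition is_sgraph (T : finType) (s : nat) (H : {set {set T}}) : bool :=
  [forall e in H, #|e| == s].

Definition deg (T : finType) (H : {set {set T}}) (I : {set T}) : nat :=
  #|[set e in H | I \subset e]|.

Definition Delta (T : finType) (i : nat) (H : {set {set T}}) : nat :=
  \max_(I : {set T} | #|I| == i) deg H I.

Definition cliques (T : finType) (s u : nat) (H : {set {set T}}) : {set {set T}} :=
  [set U : {set T} | (#|U| == u) &&
     [forall S : {set T}, ((S \subset U) && (#|S| == s)) ==> (S \in H)]].

Definition rbinom (R : realType) (x : R) (k : nat) : R :=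
  (\prod_(j < k) (x - j%:R)) / (k`!)%:R.

From mathcomp Require Import all_boot all_order all_algebra.
From mathcomp Require Import reals.
From mathcomp Require Import lra ring zify.

(* The core is a clique-counting inequality: if F is a k-graph with k >= 1,
   y >= k and |F| <= C(y,k), then (k+1) |K^(k+1)(F)| <= (y-k) |F|.  If some vertex v has degree above
   C(y-1,k-1), Pascal's rule leaves |F - v| < C(y-1,k) and the induction
   applies to F - v.  Otherwise every vertex link satisfies the inequality
   one level down, giving k d_K(v) <= (y-k) d_F(v) with K = K^(k+1)(F), and
   summing over v double counts both sides.
   Applied to the link of an i-set I in K^t(H), and since
   K^(t+1)(K^t(H)) = K^(t+1)(H), the inequality carries the degree bound
   C(x-i,t-i) to C(x-i,t+1-i).  When t <= x < t+1 this bound is at most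
   x - t < 1, so no (t+1)-clique contains an i-set, i.e. there are none. *)

Set Implicit Arguments.
Unset Strict Implicit.
Unset Printing Implicit Defensive.

Import Order.TTheory GRing.Theory Num.Theory.
Local Open Scope ring_scope.

Section RealBinomial.
Variable R : realType.
Implicit Types (y z : R) (k : nat).

Lemma rbinom0 y : rbinom y 0 = 1.
Proof. by rewrite /rbinom big_ord0 fact0 divr1. Qed.

Lemma rbinom1 y : rbinom y 1 = y.
Proof. by rewrite /rbinom big_ord1 subr0 divr1. Qed.

Lemma rbinom_ge0 y k : k%:R <= y + 1 -> 0 <= rbinom y k.
Proof.
move=> le_ky; rewrite /rbinom divr_ge0 // prodr_ge0 // => j _.
have : j.+1%:R <= k%:R :> R by rewrite ler_nat.
rewrite -addn1 natrD; lra.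
Qed.

Lemma prod_sub_nat_shift y k :
  \prod_(j < k) (y - (bump 0 j)%:R) = \prod_(j < k) (y - 1 - j%:R).
Proof. by apply: eq_bigr => j _; rewrite /bump add1n -addn1 natrD; lra. Qed.

Lemma mul_rbinom_left y k : k.+1%:R * rbinom y k.+1 = (y - k%:R) * rbinom y k.
Proof.
rewrite /rbinom big_ord_recr /= factS natrM.
have kS_neq0 : (k.+1%:R : R) != 0 by rewrite pnatr_eq0.
have fact_neq0 : ((k`!)%:R : R) != 0 by rewrite pnatr_eq0 -lt0n fact_gt0.
by field; rewrite fact_neq0 nat1r.
Qed.

Lemma mul_rbinom_diag y k : k.+1%:R * rbinom y k.+1 = y * rbinom (y - 1) k.
Proof.
rewrite /rbinom big_ord_recl /= subr0 factS natrM prod_sub_nat_shift.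
have kS_neq0 : (k.+1%:R : R) != 0 by rewrite pnatr_eq0.
have fact_neq0 : ((k`!)%:R : R) != 0 by rewrite pnatr_eq0 -lt0n fact_gt0.
by field; rewrite fact_neq0 nat1r.
Qed.

Lemma rbinomS y k : rbinom y k.+1 = rbinom (y - 1) k.+1 + rbinom (y - 1) k.
Proof.
have kS_neq0 : (k.+1%:R : R) != 0 by rewrite pnatr_eq0.
apply: (mulfI kS_neq0).
by rewrite mulrDr mul_rbinom_diag mul_rbinom_left -nat1r; ring.
Qed.

Lemma prod_sub_nat_le_fact k z : k%:R <= z <= k.+1%:R ->
  0 <= \prod_(j < k) (z - j%:R) <= (k.+1)`!%:R.
Proof.
elim: k z => [|k IHk] z /andP[le_kz le_zk]; first by rewrite big_ord0 ler01 /=.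
rewrite big_ord_recl /= subr0 prod_sub_nat_shift factS natrM.
have /andP[ge0 le_fact] : 0 <= \prod_(j < k) (z - 1 - j%:R) <= (k.+1)`!%:R.
  apply: IHk; rewrite -!nat1r in le_kz le_zk; rewrite -?nat1r.
  by apply/andP; split; lra.
have z_ge0 : 0 <= z by rewrite -nat1r in le_kz; have := ler0n R k; lra.
by rewrite mulr_ge0 //= ler_pM.
Qed.

Lemma rbinomS_le_sub z k : k%:R <= z <= k.+1%:R -> rbinom z k.+1 <= z - k%:R.
Proof.
move=> zk; have /andP[ge0 le_fact] := prod_sub_nat_le_fact zk.
move/andP: zk => [le_kz _].
rewrite /rbinom big_ord_recr /= ler_pdivrMr ?ltr0n ?fact_gt0 //.
by rewrite mulrC ler_wpM2l //; lra.
Qed.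

End RealBinomial.

Section Cliques.
Variable T : finType.
Implicit Types (A B C I K S U : {set T}) (F G H : {set {set T}}).

Lemma sgraphP n F : reflect (forall e, e \in F -> #|e| = n) (is_sgraph n F).
Proof. by apply: (iffP forall_inP) => hF e /hF => [/eqP|->]. Qed.

Lemma sgraphS n F G : G \subset F -> is_sgraph n F -> is_sgraph n G.
Proof. by move=> sGF /sgraphP hF; apply/sgraphP => e /(subsetP sGF)/hF. Qed.

Lemma cliquesP s u H U :
  reflect (#|U| = u /\ forall S, S \subset U -> #|S| = s -> S \in H)
          (U \in cliques s u H).
Proof.
rewrite inE; apply: (iffP andP) => [[/eqP cU /forallP hU]|[cU hU]].
  by split=> // S sSU cS; apply: (implyP (hU S)); rewrite sSU cS eqxx.
by split; [apply/eqP | apply/forallP => S; apply/implyP => /andP[? /eqP]; apply: hU].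
Qed.

Lemma cliques_sgraph s u H : is_sgraph u (cliques s u H).
Proof. by apply/sgraphP => e /cliquesP[]. Qed.

Lemma exists_card_between A B n : A \subset B -> (#|A| <= n <= #|B|)%N ->
  exists C, [/\ A \subset C, C \subset B & #|C| = n].
Proof.
move=> sAB /andP[le_An]; have [d ->] : exists d, n = (#|A| + d)%N.
  by exists (n - #|A|)%N; lia.
elim: d A sAB {le_An} => [|d IHd] A sAB le_AdB; first by exists A; rewrite addn0.
have /set0Pn[x] : B :\: A != set0.
  by apply/eqP => BA0; have := cardsD B A; rewrite BA0 cards0 (setIidPr sAB); lia.
rewrite inE => /andP[xA xB].
have sxAB : x |: A \subset B by rewrite subUset sub1set xB.
have [|C [sxAC sCB cC]] := IHd (x |: A) sxAB; first by rewrite cardsU1 xA; lia.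
exists C; split=> //; last by rewrite cC cardsU1 xA; lia.
exact: subset_trans (subsetUr _ _) sxAC.
Qed.

Lemma cliques0 t : cliques t t.+1 (set0 : {set {set T}}) = set0.
Proof.
apply/setP => U; rewrite in_set0; apply/negP => /cliquesP[cU hU].
have [|C [_ sCU cC]] := @exists_card_between set0 U t (sub0set _).
  by rewrite cards0 cU leqnSn.
by have := hU C sCU cC; rewrite inE.
Qed.

Lemma cliques_id s H : is_sgraph s H -> cliques s s H = H.
Proof.
move/sgraphP => hH; apply/setP => U; apply/cliquesP/idP => [[cU hU]|UH]; first exact: hU.
split=> [|S sSU cS]; first exact: hH.
suff /eqP -> : S == U by [].
by rewrite eqEcard sSU cS (hH _ UH) leqnn.
Qed.

Lemma cliques_cliques s t H : (s <= t)%N ->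
  cliques t t.+1 (cliques s t H) = cliques s t.+1 H.
Proof.
move=> le_st; apply/setP => U; apply/cliquesP/cliquesP => [[cU hU]|[cU hU]].
  split=> // A sAU cA.
  have [|C [sAC sCU cC]] := @exists_card_between A U t sAU; first by rewrite cA cU; lia.
  by have /cliquesP[_ hC] := hU C sCU cC; apply: hC.
split=> // S sSU cS; apply/cliquesP; split=> // A sAS cA.
by apply: hU => //; apply: subset_trans sAS sSU.
Qed.

Definition delete_vertex F v : {set {set T}} := [set e in F | v \notin e].

Lemma card_vertex_split F v : #|F| = (deg F [set v] + #|delete_vertex F v|)%N.
Proof.
rewrite -(cardsID [set e : {set T} | v \in e] F) /deg; congr (_ + _)%N.
  by apply: eq_card => e; rewrite !inE sub1set.
by apply: eq_card => e; rewrite !inE andbC.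
Qed.

Lemma sum_deg1 n F : is_sgraph n F -> (\sum_v deg F [set v])%N = (n * #|F|)%N.
Proof.
move/sgraphP => hF.
transitivity (\sum_v \sum_(e in F) ((v \in e) : nat))%N.
  apply: eq_bigr => v _; rewrite /deg -sum1_card big_mkcond [RHS]big_mkcond /=.
  by apply: eq_bigr => e _; rewrite !inE sub1set; case: (e \in F); case: (v \in e).
rewrite exchange_big /= mulnC -sum_nat_const.
apply: eq_bigr => e eF; rewrite -(hF e eF) -sum1_card [RHS]big_mkcond /=.
by apply: eq_bigr => v _.
Qed.

Definition link F I : {set {set T}} := [set e :\: I | e in [set e in F | I \subset e]].

Lemma card_imset_setD I (D : {set {set T}}) : (forall e, e \in D -> I \subset e) ->
  #|[set e :\: I | e in D]| = #|D|.
Proof.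
move=> hD; apply: card_in_imset => e1 e2 /hD sIe1 /hD sIe2 /setP eq12.
apply/setP => z; case zI: (z \in I); first by rewrite (subsetP sIe1) ?(subsetP sIe2).
by have := eq12 z; rewrite !inE zI.
Qed.

Lemma card_link F I : #|link F I| = deg F I.
Proof. by rewrite card_imset_setD // => e; rewrite inE => /andP[]. Qed.

Lemma link_sgraph n F I : is_sgraph n F -> is_sgraph (n - #|I|) (link F I).
Proof.
move/sgraphP => hF; apply/sgraphP => S /imsetP[e].
by rewrite inE => /andP[eF sIe] ->; rewrite cardsDS // hF.
Qed.

(* A clique through I is determined by its trace outside I, which is a clique of the link. *)
Lemma deg_cliques_le_link n F I : (#|I| <= n)%N ->
  (deg (cliques n n.+1 F) I <= #|cliques (n - #|I|) (n - #|I|).+1 (link F I)|)%N.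
Proof.
move=> le_In; rewrite /deg -(card_imset_setD (I := I)); last first.
  by move=> K; rewrite inE => /andP[].
apply/subset_leq_card/subsetP => S /imsetP[K].
rewrite inE => /andP[/cliquesP[cK hK] sIK] ->.
apply/cliquesP; split=> [|A /subsetDP[sAK dAI] cA]; first by rewrite cardsDS // cK; lia.
apply/imsetP; exists (A :|: I).
  rewrite inE subsetUr andbT; apply: hK; first by rewrite subUset sAK sIK.
  by rewrite cardsU (disjoint_setI0 dAI) cards0 cA; lia.
by rewrite setDUl setDv setU0; apply/esym/setDidPl.
Qed.

Lemma deg_cliques_eq0 n F I : (#|I| <= n)%N -> deg F I = 0%N ->
  deg (cliques n n.+1 F) I = 0%N.
Proof.
move=> le_In degI0; apply/eqP; rewrite -leqn0.
have linkI0 : link F I = set0 by apply: cards0_eq; rewrite card_link.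
by have := deg_cliques_le_link F le_In; rewrite linkI0 cliques0 cards0.
Qed.

Lemma sgraph_eq0 i n G : (i <= n)%N -> is_sgraph n G ->
  (forall I, #|I| = i -> deg G I = 0%N) -> G = set0.
Proof.
move=> le_in /sgraphP hG deg0; apply/setP => K; rewrite inE; apply/negP => KG.
have [|I [_ sIK cI]] := @exists_card_between set0 K i (sub0set _).
  by rewrite cards0 hG.
have /eqP := deg0 I cI; rewrite cards_eq0 => /eqP degI0.
by have := in_set0 K; rewrite -degI0 inE KG sIK.
Qed.

Lemma deg_cliques1_le_delete n F v :
  (deg (cliques n n.+1 F) [set v] <= #|delete_vertex F v|)%N.
Proof.
rewrite /deg -(card_imset_setD (I := [set v])); last by move=> K; rewrite inE => /andP[].
apply/subset_leq_card/subsetP => S /imsetP[K].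
rewrite inE sub1set => /andP[/cliquesP[cK hK] vK] ->.
rewrite inE setD11 andbT; apply: hK; first exact: subD1set.
by have := cardsD1 v K; rewrite vK cK; lia.
Qed.

Lemma card_cliques_le_delete n F v :
  (#|cliques n n.+1 F| <= #|delete_vertex F v| + #|cliques n n.+1 (delete_vertex F v)|)%N.
Proof.
rewrite (card_vertex_split _ v) leq_add ?deg_cliques1_le_delete //.
apply/subset_leq_card/subsetP => K; rewrite inE => /andP[/cliquesP[cK hK] vK].
apply/cliquesP; split=> // S sSK cS; rewrite inE hK //=.
by apply: contra vK; apply: (subsetP sSK).
Qed.

End Cliques.

Section CliqueCount.
Variable R : realType.

Definition clique_count_bound (n : nat) : Prop :=
  forall (T : finType) (F : {set {set T}}) (y : R),
  is_sgraph n F -> n%:R <= y -> #|F|%:R <= rbinom y n ->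
  n.+1%:R * #|cliques n n.+1 F|%:R <= (y - n%:R) * #|F|%:R.

Section VertexBounds.
Variable T : finType.
Implicit Types (F : {set {set T}}) (y : R).

Lemma clique_count_le_sum n F y : (0 < n)%N -> is_sgraph n F ->
  (forall v, n%:R * (deg (cliques n n.+1 F) [set v])%:R <= (y - n%:R) * (deg F [set v])%:R) ->
  n.+1%:R * #|cliques n n.+1 F|%:R <= (y - n%:R) * #|F|%:R.
Proof.
move=> n_gt0 hF local.
have : \sum_v n%:R * (deg (cliques n n.+1 F) [set v])%:R
         <= \sum_v (y - n%:R) * (deg F [set v])%:R by apply: ler_sum => v _.
rewrite -!mulr_sumr -!natr_sum (sum_deg1 (cliques_sgraph _ _ _)) (sum_deg1 hF) !natrM.
by rewrite [X in _ <= X]mulrCA ler_pM2l ?ltr0n.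
Qed.

Lemma light_vertex_bound1 F y v :
  is_sgraph 1 F -> #|F|%:R <= rbinom y 1 -> (deg F [set v])%:R <= rbinom (y - 1) 0 ->
  1%:R * (deg (cliques 1 2 F) [set v])%:R <= (y - 1%:R) * (deg F [set v])%:R.
Proof.
rewrite rbinom0 rbinom1 lern1 mul1r => hF le_Fy.
rewrite leq_eqVlt ltnS leqn0 => /orP[/eqP deg1 | /eqP deg0]; last first.
  by rewrite deg_cliques_eq0 ?cards1 // deg0 !mulr0.
have := card_vertex_split F v; rewrite deg1 => cF.
have := deg_cliques1_le_delete 1 F v; rewrite -(ler_nat R) => le_deg.
by rewrite mulr1; apply: (le_trans le_deg); rewrite cF natrD in le_Fy; lra.
Qed.

Lemma light_vertex_boundS k F y v : clique_count_bound k.+1 ->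
  is_sgraph k.+2 F -> k.+2%:R <= y -> (deg F [set v])%:R <= rbinom (y - 1) k.+1 ->
  k.+2%:R * (deg (cliques k.+2 k.+3 F) [set v])%:R
    <= (y - k.+2%:R) * (deg F [set v])%:R.
Proof.
move=> bound hF le_ky le_deg.
have le_link := deg_cliques_le_link F (I := [set v]) (n := k.+2).
rewrite cards1 subn1 /= in le_link.
have hL := link_sgraph [set v] hF; rewrite cards1 subn1 /= in hL.
have := bound _ _ (y - 1) hL; rewrite card_link -nat1r => /(_ _ le_deg) bound_link.
have le_cliques : k.+2%:R * (deg (cliques k.+2 k.+3 F) [set v])%:R
    <= k.+2%:R * #|cliques k.+1 k.+2 (link F [set v])|%:R :> R.
  by rewrite ler_pM2l ?ltr0n // ler_nat le_link.
apply: (le_trans le_cliques); apply: le_trans (bound_link _) _.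
  by rewrite -!nat1r in le_ky *; lra.
by rewrite -!nat1r in le_ky; lra.
Qed.

Lemma card_delete_heavy k F y v :
  #|F|%:R <= rbinom y k.+1 -> rbinom (y - 1) k < (deg F [set v])%:R ->
  #|delete_vertex F v|%:R < rbinom (y - 1) k.+1.
Proof. by rewrite (card_vertex_split F v) natrD rbinomS; lra. Qed.

(* At most |F - v| cliques contain v; the others are cliques of F - v, to
   which the bound at y - 1 applies. *)
Lemma heavy_vertex_step k F y v :
  is_sgraph k.+1 F -> k.+1%:R <= y -> #|F|%:R <= rbinom y k.+1 ->
  rbinom (y - 1) k < (deg F [set v])%:R ->
  (k.+1%:R <= y - 1 -> k.+2%:R * #|cliques k.+1 k.+2 (delete_vertex F v)|%:R
                        <= (y - 1 - k.+1%:R) * #|delete_vertex F v|%:R) ->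
  k.+2%:R * #|cliques k.+1 k.+2 F|%:R <= (y - k.+1%:R) * #|F|%:R.
Proof.
move=> hF le_ky le_Fy heavy bound_del.
have lt_del := card_delete_heavy le_Fy heavy.
have le_cl := card_cliques_le_delete k.+1 F v.
rewrite -(ler_nat R) natrD in le_cl.
have cF := card_vertex_split F v.
case: (lerP k.+1%:R (y - 1)) => [le_ky1 | lt_yk1].
  have := bound_del le_ky1.
  have e1 := mul_rbinom_diag y k.
  have e2 : k.+1%:R * #|F|%:R <= k.+1%:R * rbinom y k.+1 by rewrite ler_pM2l ?ltr0n.
  have e3 : y * rbinom (y - 1) k <= y * (deg F [set v])%:R.
    by rewrite ler_wpM2l ?ltW //; have := ler0n R k.+1; lra.
  have e4 : k.+2%:R * #|cliques k.+1 k.+2 F|%:R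
      <= k.+2%:R * (#|delete_vertex F v|%:R + #|cliques k.+1 k.+2 (delete_vertex F v)|%:R) :> R.
    by rewrite ler_pM2l ?ltr0n.
  rewrite cF natrD in e2 *; rewrite -[k.+2%:R]nat1r in e4 *.
  lra.
rewrite -!nat1r in le_ky lt_yk1.
have le_small : rbinom (y - 1) k.+1 <= y - 1 - k%:R.
  by apply: rbinomS_le_sub; rewrite -nat1r; apply/andP; split; lra.
have : #|delete_vertex F v|%:R < 1 :> R by lra.
rewrite ltrn1 ltnS leqn0 cards_eq0 => /eqP del0.
rewrite del0 cliques0 cards0 addr0 in le_cl.
have -> : #|cliques k.+1 k.+2 F| = 0%N by apply/eqP; rewrite -leqn0 -(ler_nat R).
by rewrite mulr0 mulr_ge0 //; lra.
Qed.

End VertexBounds.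

Lemma clique_count_bound_of_light k :
  (forall (T : finType) (F : {set {set T}}) (y : R) v,
     is_sgraph k.+1 F -> k.+1%:R <= y -> #|F|%:R <= rbinom y k.+1 ->
     (deg F [set v])%:R <= rbinom (y - 1) k ->
     k.+1%:R * (deg (cliques k.+1 k.+2 F) [set v])%:R
       <= (y - k.+1%:R) * (deg F [set v])%:R) ->
  clique_count_bound k.+1.
Proof.
move=> light T F; have [m] := ubnP #|F|.
elim: m F => // m IHm F /ltnSE le_Fm y hF le_ky le_Fy.
case: (boolP [exists v, rbinom (y - 1) k < (deg F [set v])%:R]); last first.
  move=> /existsPn light_all; apply: clique_count_le_sum => // v.
  by apply: light => //; rewrite leNgt; apply: light_all.
case/existsP => v heavy; apply: (heavy_vertex_step hF le_ky le_Fy heavy) => le_ky1.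
have deg_gt0 : (0 < deg F [set v])%N.
  rewrite -(ltr0n R); apply: le_lt_trans heavy; apply: rbinom_ge0.
  by rewrite -nat1r in le_ky; lra.
apply: IHm => //.
- by move: le_Fm; rewrite (card_vertex_split F v); lia.
- by apply: sgraphS hF; apply/subsetP => e; rewrite inE => /andP[].
- exact/ltW/(card_delete_heavy le_Fy heavy).
Qed.

Theorem clique_count_boundP k : clique_count_bound k.+1.
Proof.
elim: k => [|k IHk]; apply: clique_count_bound_of_light => T F y v hF le_ky le_Fy le_deg.
  exact: light_vertex_bound1.
exact: light_vertex_boundS.
Qed.

End CliqueCount.

Section CliqueDegrees.
Variables (R : realType) (T : finType).
Implicit Types (G H : {set {set T}}) (I : {set T}) (x : R).

(* The clique count bound for the link of I, together with
   (t+1-i) C(x-i, t+1-i) = (x-t) C(x-i, t-i). *)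
Lemma deg_cliques_le_rbinom i t G x I :
  (i < t)%N -> is_sgraph t G -> #|I| = i -> t%:R <= x ->
  (deg G I)%:R <= rbinom (x - i%:R) (t - i) ->
  (deg (cliques t t.+1 G) I)%:R <= rbinom (x - i%:R) (t.+1 - i).
Proof.
move=> lt_it hG cI le_tx le_degI.
have le_link := deg_cliques_le_link G (I := I) (n := t); rewrite cI in le_link.
have hL := link_sgraph I hG; rewrite cI in hL.
have [k tiE] : exists k, (t - i)%N = k.+1 by exists (t - i).-1; lia.
have le_kx : k.+1%:R <= x - i%:R by rewrite -tiE natrB ?(ltnW lt_it) //; lra.
rewrite tiE in le_link hL le_degI; rewrite subSn ?(ltnW lt_it) // tiE.
have := clique_count_boundP hL le_kx; rewrite card_link => /(_ le_degI) bound_link.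
rewrite -(ler_pM2l (ltr0Sn R k.+1)) mul_rbinom_left.
apply: le_trans (le_trans bound_link _).
  by rewrite ler_pM2l ?ltr0n // ler_nat le_link // ltnW.
by rewrite ler_wpM2l // subr_ge0.
Qed.

Lemma Delta_le i G (r : R) : 0 <= r ->
  (forall I, #|I| = i -> (deg G I)%:R <= r) -> (Delta i G)%:R <= r.
Proof.
move=> r_ge0 le_deg; apply: (big_ind (fun n : nat => n%:R <= r)) => //.
  by move=> m n; rewrite /maxn; case: ifP.
by move=> I /eqP; apply: le_deg.
Qed.

Lemma deg_le_Delta i G I : #|I| = i -> (deg G I <= Delta i G)%N.
Proof. by move=> cI; apply: leq_bigmax_cond; rewrite cI. Qed.

Lemma deg_cliquesS_le i s t H x I :
  (i < s)%N -> (s <= t)%N -> t%:R <= x -> #|I| = i ->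
  (Delta i (cliques s t H))%:R <= rbinom (x - i%:R) (t - i) ->
  (deg (cliques s t.+1 H) I)%:R <= rbinom (x - i%:R) (t.+1 - i).
Proof.
move=> lt_is le_st le_tx cI le_Delta; rewrite -cliques_cliques //.
have le_degI : (deg (cliques s t H) I)%:R <= rbinom (x - i%:R) (t - i).
  by apply: le_trans le_Delta; rewrite ler_nat (deg_le_Delta _ cI).
apply: deg_cliques_le_rbinom le_degI => //; first exact: leq_trans lt_is le_st.
exact: cliques_sgraph.
Qed.

Lemma Delta_cliquesS_le i s t H x :
  (i < s)%N -> (s <= t)%N -> t.+1%:R <= x ->
  (Delta i (cliques s t H))%:R <= rbinom (x - i%:R) (t - i) ->
  (Delta i (cliques s t.+1 H))%:R <= rbinom (x - i%:R) (t.+1 - i).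
Proof.
move=> lt_is le_st le_tx le_Delta; have lt_it := leq_trans lt_is le_st.
apply: Delta_le => [|I cI]; last first.
  by apply: deg_cliquesS_le le_Delta => //; rewrite -nat1r in le_tx; lra.
by apply: rbinom_ge0; rewrite natrB ?(leqW (ltnW lt_it)) //; lra.
Qed.

(* For t <= x < t + 1 the bound on d(I) drops below 1, so no (t+1)-clique
   contains an i-set. *)
Lemma cliquesS_eq0 i s t H x :
  (i < s)%N -> (s <= t)%N -> t%:R <= x < t.+1%:R ->
  (Delta i (cliques s t H))%:R <= rbinom (x - i%:R) (t - i) ->
  cliques s t.+1 H = set0.
Proof.
move=> lt_is le_st /andP[le_tx lt_xt] le_Delta; have lt_it := leq_trans lt_is le_st.
apply: (sgraph_eq0 (leqW (ltnW lt_it)) (cliques_sgraph s t.+1 H)) => I cI.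
have := deg_cliquesS_le lt_is le_st le_tx cI le_Delta.
have ti : (t - i)%:R = t%:R - i%:R :> R by rewrite natrB ?(ltnW lt_it).
have le_small : rbinom (x - i%:R) (t - i).+1 <= x - i%:R - (t - i)%:R.
  by apply: rbinomS_le_sub; rewrite -nat1r ti -nat1r in lt_xt *; apply/andP; split; lra.
rewrite subSn ?(ltnW lt_it) // => le_deg.
have : (deg (cliques s t.+1 H) I)%:R < 1 :> R by rewrite ti -nat1r in le_small lt_xt; lra.
by rewrite ltrn1 ltnS leqn0 => /eqP.
Qed.

End CliqueDegrees.

Theorem mainTheorem7 (R : realType) (T : finType) (i s u : nat)
  (H : {set {set T}}) (x : R) :
  (1 <= i)%N -> (i < s)%N -> (s <= u)%N ->
  is_sgraph s H ->
  s%:R <= x ->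
  (Delta i H)%:R <= rbinom (x - i%:R) (s - i) ->
  (x < u%:R -> cliques s u H = set0) /\
  (u%:R <= x -> (Delta i (cliques s u H))%:R <= rbinom (x - i%:R) (u - i)).
Proof.
move=> _ lt_is le_su hH le_sx DeltaH.
elim: u le_su => [|t IHt]; first by rewrite leqn0 => /eqP s0; rewrite s0 in lt_is.
rewrite leq_eqVlt ltnS => /orP[/eqP <- | le_st].
  by rewrite cliques_id //; split=> // lt_xs; exfalso; lra.
have [empty_t Delta_t] := IHt le_st.
split=> [lt_xt | le_tx].
  have [/empty_t cliques_t0 | le_tx] := ltrP x t%:R.
    by rewrite -cliques_cliques // cliques_t0 cliques0.
  by apply: (cliquesS_eq0 lt_is le_st _ (Delta_t le_tx)); rewrite le_tx.
apply: (Delta_cliquesS_le lt_is le_st le_tx (Delta_t _)).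
by rewrite -nat1r in le_tx; lra.
Qed.
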